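(* Let $n\ge1$ and let $X,Y\in\widetilde{Sp}(\mathbb{R}^n\times\mathbb{R}^n)$ with $X\neq Y$. Then there exists $f\in A_{fin}[\widetilde{Sp}(\mathbb{A}^1_n)]$ with $\varphi_X(f)\neq\varphi_Y(f)$.
   Context: A pair $(\mathbf z,\mathbf z')\in\mathbb{R}^n\times\mathbb{R}^n$ is degenerate if $z_j=z'_j$ for some $j$. $\widetilde{Sp}(\mathbb{R}^n\times\mathbb{R}^n)$ is the set of finite multisets of points of $\mathbb{R}^n\times\mathbb{R}^n$ modulo the equivalence relation generated by adding or removing degenerate pairs. For $m\ge1$ let $P_m=\mathbb{R}[x_{ij},y_{ij}]_{1\le i\le m,\,1\le j\le n}$ graded by total degree; $S_m$ permutes the block index $i$ simultaneously in $x$ and $y$; $A_m=P_m^{S_m}$; $\pi_m:A_{m+1}\to A_m$ sets $x_{m+1,j}=y_{m+1,j}=0$; $A^\infty_{fin}=\varprojlim_m A_m$ in graded rings (finite sums of compatible families of homogeneous elements of a common degree). For a finite multiset $X=\{(\mathbf{x}_1,\mathbf{y}_1),\dots,(\mathbf{x}_r,\mathbf{y}_r)\}$ and $f\in A^\infty_{fin}$, $\varphi_X(f)=f_m(\mathbf{x}_1,\mathbf{y}_1,\dots,\mathbf{x}_r,\mathbf{y}_r,0,\dots,0)$ for any $m\ge r$. $A_{fin}[\widetilde{Sp}(\mathbb{A}^1_n)]$ is the set of $f\in A^\infty_{fin}$ with $\varphi_{X\cup\{(\mathbf z,\mathbf z')\}}(f)=\varphi_X(f)$ for all finite multisets $X$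 and degenerate pairs $(\mathbf z,\mathbf z')$; for such $f$, $\varphi_X(f)$ is well defined for $X\in\widetilde{Sp}(\mathbb{R}^n\times\mathbb{R}^n)$. *)

From Stdlib Require Import Reals Permutation Relations.
From mathcomp Require Import all_boot all_fingroup.

Set Implicit Arguments.
Unset Strict Implicit.
Unset Printing Implicit Defensive.

Definition pt (n : nat) : Type := (n.-tuple R * n.-tuple R)%type.

Definition zero_pt (n : nat) : pt n := (nseq_tuple n R0, nseq_tuple n R0).

Definition degenerate (n : nat) (p : pt n) : Prop :=
  exists j : 'I_n, tnth p.1 j = tnth p.2 j.

(* Variables of P_m : x_{ij} (b = false) and y_{ij} (b = true). *)
Definition var (m n : nat) : Type := ('I_m * 'I_n * bool)%type.

Definition valv (m n : nat) (v : 'I_m -> pt n) (x : var m n) : R :=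
  let '(i, j, b) := x in if b then tnth (v i).2 j else tnth (v i).1 j.

(* Polynomials in P_m: finite lists of (coefficient, monomial), a monomial
   being the list (multiset) of the variables occurring in it. *)
Definition poly (m n : nat) : Type := seq (R * seq (var m n)).

Definition mono_eval (m n : nat) (v : 'I_m -> pt n) (s : seq (var m n)) : R :=
  foldr (fun x acc => Rmult (valv v x) acc) R1 s.

Definition peval (m n : nat) (p : poly m n) (v : 'I_m -> pt n) : R :=
  foldr (fun t acc => Rplus (Rmult t.1 (mono_eval v t.2)) acc) R0 p.

Definition homog (m n d : nat) (p : poly m n) : Prop :=
  forall t, List.In t p -> size t.2 = d.

(* S_m-invariance (polynomial identities over R = identities of functions). *)
Definition symmetric (m n : nat) (p : poly m n) : Prop :=
  forall (s : 'S_m) (v : 'I_m -> pt n), peval p (fun i => v (s i)) = peval p v.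

(* Extension of a valuation of m blocks by a zero (m+1)-th block: realizes
   pi_m : A_{m+1} -> A_m (set x_{m+1,j} = y_{m+1,j} = 0). *)
Definition ext0 (m n : nat) (v : 'I_m -> pt n) : 'I_m.+1 -> pt n :=
  fun i => match unlift ord_max i with Some k => v k | None => zero_pt n end.

(* A compatible family (f_m)_{m >= 1} of homogeneous elements of a common
   degree; hf F k is the component f_{k+1} in A_{k+1}. *)
Record hfam (n : nat) := HFam {
  hdeg : nat;
  hf : forall k : nat, poly k.+1 n;
  hf_homog : forall k, homog hdeg (hf k);
  hf_sym : forall k, symmetric (hf k);
  hf_compat : forall k (v : 'I_k.+1 -> pt n),
      peval (hf k.+1) (ext0 v) = peval (hf k) v
}.

(* Elements of A^infty_fin: finite sums of such families. *)
Definition Ainf (n : nat) : Type := seq (hfam n).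

Definition padX (n : nat) (X : seq (pt n)) : 'I_(size X).+1 -> pt n :=
  fun i => nth (zero_pt n) X i.

(* phi_X(f) = f_m(X, 0, ..., 0), here with m = |X| + 1 >= |X|. *)
Definition phi (n : nat) (X : seq (pt n)) (f : Ainf n) : R :=
  foldr (fun F acc => Rplus (peval (hf F (size X)) (@padX n X)) acc) R0 f.

Definition in_Afin_Sp (n : nat) (f : Ainf n) : Prop :=
  forall (X : seq (pt n)) (p : pt n), degenerate p -> phi (p :: X) f = phi X f.

(* Equivalence defining ~Sp(R^n x R^n) on finite multisets (lists up to
   permutation): generated by reordering and adding/removing degenerate pairs. *)
Inductive sp_step (n : nat) : seq (pt n) -> seq (pt n) -> Prop :=
  | sp_perm X Y : Permutation X Y -> sp_step X Y
  | sp_add X p : degenerate p -> sp_step X (p :: X).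

Definition sp_equiv (n : nat) : seq (pt n) -> seq (pt n) -> Prop :=
  clos_refl_sym_trans _ (@sp_step n).

From Pilot Require Import Defs.
From HB Require Import structures.
From Stdlib Require Import Reals Permutation Relations.
From mathcomp Require Import all_boot all_fingroup.
From Stdlib Require Import Classical ClassicalDescription Lra.

(** Power sums [f = sum_i P(x_i, y_i)] of a polynomial [P] in one point
    [(x, y)] of [R^n x R^n] without constant term form compatible symmetric
    families, with [phi_X(f) = sum_(p in X) P(p)].  Taking [P = D * g] with
    [D = prod_j (x_j - y_j)] (which has no constant term as [n >= 1]), the
    power sum ignores degenerate pairs, so it lies in [A_fin[~Sp]].  If [X]
    and [Y] are inequivalent, some nondegenerate [q] occurs in them with
    different multiplicities; choosing [g] nonzero at [q] and zero at the
    other points of [X] and [Y], [phi_X(f)] and [phi_Y(f)] are these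
    multiplicities times [P(q) <> 0]. *)

Set Implicit Arguments.
Unset Strict Implicit.
Unset Printing Implicit Defensive.

Lemma Rplus_associative : associative Rplus.
Proof. by move=> x y z; rewrite Rplus_assoc. Qed.

HB.instance Definition _ :=
  Monoid.isComLaw.Build R R0 Rplus Rplus_associative Rplus_comm Rplus_0_l.

Section PointPolynomials.
Local Open Scope R_scope.
Variable n : nat.

Definition coord (p : pt n) (jb : 'I_n * bool) : R :=
  if jb.2 then tnth p.2 jb.1 else tnth p.1 jb.1.

Lemma coord_inj (p q : pt n) : (forall jb, coord p jb = coord q jb) -> p = q.
Proof.
case: p q => [p1 p2] [q1 q2] E.
by congr pair; apply: eq_from_tnth => j; [exact: (E (j, false)) | exact: (E (j, true))].
Qed.

Definition spoly : Type := seq (R * seq ('I_n * bool)).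

Definition smono (p : pt n) (mu : seq ('I_n * bool)) : R :=
  foldr (fun jb acc => coord p jb * acc) 1 mu.

Definition seval (P : spoly) (p : pt n) : R :=
  foldr (fun t acc => t.1 * smono p t.2 + acc) 0 P.

Fixpoint spoly_mul (P Q : spoly) : spoly :=
  if P is t :: P' then
    map (fun u => (t.1 * u.1, t.2 ++ u.2)) Q ++ spoly_mul P' Q
  else [::].
Arguments spoly_mul : simpl never.

Lemma smono_cat p mu nu : smono p (mu ++ nu) = smono p mu * smono p nu.
Proof. by elim: mu => [|jb mu IH] /=; rewrite ?IH; ring. Qed.

Lemma seval_cat P Q p : seval (P ++ Q) p = seval P p + seval Q p.
Proof. by elim: P => [|t P IH] /=; rewrite ?IH; ring. Qed.

Lemma seval_mul P Q p : seval (spoly_mul P Q) p = seval P p * seval Q p.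
Proof.
elim: P => [|t P IH] /=; first ring.
have seval_term : seval (map (fun u => (t.1 * u.1, t.2 ++ u.2)) Q) p =
    t.1 * smono p t.2 * seval Q p.
  by elim: Q {IH} => [|u Q IHQ] /=; rewrite ?IHQ ?smono_cat; ring.
by rewrite seval_cat IH seval_term; ring.
Qed.

Definition no_const_term (P : spoly) : bool := all (fun t => t.2 != [::]) P.

Lemma no_const_term_mul P Q : no_const_term P -> no_const_term (spoly_mul P Q).
Proof.
elim: P => [|t P IH] // /andP[t2 /IH PQ].
rewrite /no_const_term /= all_cat all_map; apply/andP; split=> //.
by elim: Q {IH PQ} => //= u Q ->; case: t.2 t2.
Qed.

Lemma smono_zero_pt mu : mu != [::] -> smono (zero_pt n) mu = 0.
Proof. by case: mu => [|[j []] mu] //= _; rewrite /coord /= tnth_nseq Rmult_0_l. Qed.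

Lemma seval_zero_pt P : no_const_term P -> seval P (zero_pt n) = 0.
Proof.
elim: P => [|t P IH] //= /andP[/smono_zero_pt -> /IH ->]; ring.
Qed.

Definition degeneracy_poly : spoly :=
  foldr (fun j D => spoly_mul [:: (1, [:: (j, false)]); (-1, [:: (j, true)])] D)
    [:: (1, [::])] (enum 'I_n).

Lemma seval_degeneracy_poly_eq0 p :
  seval degeneracy_poly p = 0 <-> degenerate p.
Proof.
have -> : seval degeneracy_poly p =
    foldr (fun j acc => (tnth p.1 j - tnth p.2 j) * acc) 1 (enum 'I_n).
  rewrite /degeneracy_poly; elim: (enum _) => [|j r IH] /=; first ring.
  by rewrite seval_mul IH /seval /smono /coord /=; ring.
split=> [|[j Ej]].
- elim: (enum _) => [|j r IH] /=; first lra.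
  by case/Rmult_integral => [Ej|/IH //]; exists j; lra.
- have : j \in enum 'I_n by rewrite mem_enum.
  elim: (enum _) => [|k r IH] //=; rewrite in_cons => /orP[/eqP <-|/IH ->].
  + by rewrite Ej; ring.
  + ring.
Qed.

Lemma no_const_term_degeneracy_poly : (0 < n)%N -> no_const_term degeneracy_poly.
Proof.
move=> n_gt0; rewrite /degeneracy_poly.
have : Ordinal n_gt0 \in enum 'I_n by rewrite mem_enum.
by case: (enum _) => [|j r] //= _; apply: no_const_term_mul.
Qed.

(* Lagrange interpolation: one linear factor for each point to be killed. *)
Lemma separating_spoly (q : pt n) (S : seq (pt n)) : exists2 g : spoly,
  seval g q <> 0 & forall r, List.In r S -> r <> q -> seval g r = 0.
Proof.
elim: S => [|r S [g gq g0]].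
  by exists [:: (1, [::])] => //=; lra.
have [->|rq] := classic (r = q).
  by exists g => // r' [<-|Sr'] //; exact: g0.
have [jb rq_jb] : exists jb, coord r jb <> coord q jb.
  by apply: not_all_ex_not => rq_coord; apply/rq/coord_inj.
pose lin := [:: (1, [:: jb]); (- coord r jb, [::])].
have seval_lin x : seval lin x = coord x jb - coord r jb.
  by rewrite /seval /smono /=; ring.
exists (spoly_mul g lin).
  by rewrite seval_mul seval_lin; apply: Rmult_integral_contrapositive_currified; lra.
move=> r' [<-|Sr'] r'q; rewrite seval_mul seval_lin; first ring.
by rewrite g0 //; ring.
Qed.

End PointPolynomials.

Section PowerSums.
Local Open Scope R_scope.
Variable n : nat.

Definition lift_mono m (i : 'I_m) (mu : seq ('I_n * bool)) : seq (var m n) :=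
  map (fun jb => (i, jb.1, jb.2)) mu.

Lemma mono_eval_lift m (v : 'I_m -> pt n) i mu :
  mono_eval v (lift_mono i mu) = smono (v i) mu.
Proof. by elim: mu => [|[j b] mu /= ->]. Qed.

(* The power sum of the constant monomial would be [m * c], which is not
   compatible with [ext0]; it is replaced by [0]. *)
Definition psum_poly m (c : R) (mu : seq ('I_n * bool)) : Defs.poly m n :=
  if mu is [::] then [::] else map (fun i => (c, lift_mono i mu)) (enum 'I_m).

Lemma peval_psum_poly m (v : 'I_m -> pt n) c mu : mu != [::] ->
  peval (psum_poly m c mu) v = \big[Rplus/0]_(i < m) (c * smono (v i) mu).
Proof.
case: mu => [//|jb mu] _; rewrite /psum_poly -big_enum.
elim: (enum _) => [|i r IH]; rewrite ?big_nil ?big_cons //=.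
by rewrite IH -mono_eval_lift.
Qed.

Lemma psum_poly_homog m c mu : Defs.homog (size mu) (psum_poly m c mu).
Proof.
case: mu => [|jb mu] t //=.
by rewrite List.in_map_iff => -[i [<- _]]; rewrite /= size_map.
Qed.

Lemma psum_poly_sym m c mu : Defs.symmetric (psum_poly m c mu).
Proof.
move=> s v; case: mu => [//|jb mu].
by rewrite !peval_psum_poly // [RHS](reindex_inj (@perm_inj _ s)).
Qed.

Lemma psum_poly_compat k c mu (v : 'I_k.+1 -> pt n) :
  peval (psum_poly k.+2 c mu) (ext0 v) = peval (psum_poly k.+1 c mu) v.
Proof.
case: mu => [//|jb mu].
rewrite !peval_psum_poly // big_ord_recr /ext0 unlift_none.
rewrite smono_zero_pt // Rmult_0_r -[RHS]Rplus_0_r; congr Rplus.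
apply: eq_bigr => i _; congr (c * smono _ _).
have -> : widen_ord (leqnSn k.+1) i = lift ord_max i.
  by apply: val_inj; rewrite /= /bump leqNgt ltn_ord.
by rewrite liftK.
Qed.

Definition psum_family (c : R) (mu : seq ('I_n * bool)) : hfam n :=
  @HFam n (size mu) (fun k => psum_poly k.+1 c mu)
    (fun k => @psum_poly_homog k.+1 c mu) (fun k => @psum_poly_sym k.+1 c mu)
    (fun k v => @psum_poly_compat k c mu v).

Definition power_sum (P : spoly n) : Ainf n :=
  map (fun t => psum_family t.1 t.2) P.

Lemma sum_padX (h : pt n -> R) (X : seq (pt n)) :
  \big[Rplus/0]_(i < (size X).+1) h (@padX n X i) =
  \big[Rplus/0]_(p <- X) h p + h (zero_pt n).
Proof.
elim: X => [|p X IH]; first by rewrite big_ord_recl big_ord0 big_nil /padX /=; ring.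
by rewrite big_ord_recl big_cons /= Rplus_assoc -IH.
Qed.

Lemma phi_power_sum X P : no_const_term P ->
  phi X (power_sum P) = \big[Rplus/0]_(p <- X) seval P p.
Proof.
move=> P0; rewrite -[RHS]Rplus_0_r -{2}(seval_zero_pt P0) -sum_padX.
elim: P P0 => [|[c mu] P IH] /= => [_|/andP[mu0 /IH ->]].
  by rewrite big1_eq.
by rewrite peval_psum_poly // -big_split.
Qed.

Lemma power_sum_in_Afin_Sp P : no_const_term P ->
  (forall p, degenerate p -> seval P p = 0) -> in_Afin_Sp (power_sum P).
Proof.
move=> P0 Pdeg X p p_deg.
by rewrite !phi_power_sum // big_cons Pdeg // Rplus_0_l.
Qed.

End PowerSums.

Section Multiplicities.
Local Open Scope R_scope.
Variable n : nat.

Definition pt_eq_dec (p q : pt n) : {p = q} + {p <> q} :=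
  excluded_middle_informative (p = q).

Definition mult (X : seq (pt n)) (q : pt n) : nat := List.count_occ pt_eq_dec X q.

Definition nondeg (p : pt n) : bool :=
  if excluded_middle_informative (degenerate p) then false else true.

Lemma nondegP p : reflect (~ degenerate p) (nondeg p).
Proof. by rewrite /nondeg; case: excluded_middle_informative; constructor. Qed.

Lemma sp_equiv_cons p (X Y : seq (pt n)) :
  sp_equiv X Y -> sp_equiv (p :: X) (p :: Y).
Proof.
elim=> [_ _ [X0 Y0 XY|X0 d d_deg] | X0 | X0 Y0 _ IH | X0 Y0 Z0 _ IH1 _ IH2].
- exact/rst_step/sp_perm/perm_skip.
- apply: (@rst_trans _ _ _ (d :: p :: X0)); first exact/rst_step/sp_add.
  exact/rst_step/sp_perm/perm_swap.
- exact: rst_refl.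
- exact: rst_sym.
- exact: rst_trans IH2.
Qed.

Lemma sp_equiv_filter_nondeg (X : seq (pt n)) : sp_equiv X (List.filter nondeg X).
Proof.
elim: X => [|p X IH] /=; first exact: rst_refl.
case: nondegP => [_|p_deg]; first exact: sp_equiv_cons.
apply: (@rst_trans _ _ _ X) IH.
by apply: rst_sym; apply: rst_step; apply: sp_add; apply: NNPP.
Qed.

Lemma mult_filter_nondeg X q : ~ degenerate q ->
  mult (List.filter nondeg X) q = mult X q.
Proof.
move=> q_nd; elim: X => [|p X IH] //=.
case: nondegP => [_|p_deg] /=; rewrite /mult /= -!/(mult _ q) IH //.
by case: pt_eq_dec => // pq; case: p_deg; rewrite pq.
Qed.

Lemma sp_equiv_of_mult (X Y : seq (pt n)) :
  (forall q, ~ degenerate q -> mult X q = mult Y q) -> sp_equiv X Y.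
Proof.
move=> XY.
apply: (@rst_trans _ _ _ (List.filter nondeg X)); first exact: sp_equiv_filter_nondeg.
apply: (@rst_trans _ _ _ (List.filter nondeg Y)); last first.
  by apply: rst_sym; apply: sp_equiv_filter_nondeg.
apply: rst_step; apply: sp_perm; apply/(Permutation_count_occ pt_eq_dec) => q.
have [q_deg|q_nd] := classic (degenerate q).
  by rewrite !(proj1 (List.count_occ_not_In _ _ _)) // => /List.filter_In[_ /nondegP].
by rewrite -!/(mult _ q) !mult_filter_nondeg // XY.
Qed.

Lemma sum_supported_at (h : pt n -> R) Z q :
  (forall p, List.In p Z -> p <> q -> h p = 0) ->
  \big[Rplus/0]_(p <- Z) h p = INR (mult Z q) * h q.
Proof.
elim: Z => [|p Z IH] h0 /=; first by rewrite big_nil /=; ring.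
rewrite big_cons /mult /= -/(mult Z q) IH => [|r Zr]; last by apply: h0; right.
case: pt_eq_dec => [->|pq]; first by rewrite S_INR; ring.
by rewrite h0 //; [ring | left].
Qed.

End Multiplicities.

Theorem lemma4p6 (n : nat) (hn : (1 <= n)%N) (X Y : seq (pt n)) :
  ~ sp_equiv X Y ->
  exists f : Ainf n, in_Afin_Sp f /\ phi X f <> phi Y f.
Proof.
move=> XY.
have [q q_nd mult_q] : exists2 q, ~ degenerate q & mult X q <> mult Y q.
  apply: NNPP => no_q; apply/XY/sp_equiv_of_mult => q q_nd.
  by apply: NNPP => mult_q; apply: no_q; exists q.
have [g gq g0] := separating_spoly q (X ++ Y).
pose P := spoly_mul (degeneracy_poly n) g.
have P0 : no_const_term P by apply/no_const_term_mul/no_const_term_degeneracy_poly.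
have Pdeg p : degenerate p -> seval P p = R0.
  by move/seval_degeneracy_poly_eq0 => D0; rewrite seval_mul D0 Rmult_0_l.
have Pq : seval P q <> R0.
  rewrite seval_mul; apply: Rmult_integral_contrapositive_currified => //.
  by move/seval_degeneracy_poly_eq0.
have phi_P Z : (forall p, List.In p Z -> List.In p (X ++ Y)) ->
    phi Z (power_sum P) = Rmult (INR (mult Z q)) (seval P q).
  move=> ZXY; rewrite phi_power_sum // (sum_supported_at (q := q)) // => p /ZXY.
  by move=> XYp pq; rewrite seval_mul g0 // Rmult_0_r.
exists (power_sum P); split; first exact: power_sum_in_Afin_Sp.
rewrite !phi_P => [E|p Yp|p Xp].
- by apply/mult_q/INR_eq/(Rmult_eq_reg_r _ _ _ E).
- by apply: List.in_or_app; right.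
- by apply: List.in_or_app; left.
Qed.
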